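(* Let $n\in\mathbb{N}$, let $G=D_n=\langle\sigma,\varrho\mid\sigma^2=e=\varrho^n,\ \sigma\varrho\sigma^{-1}=\varrho^{-1}\rangle$, let $A=\mathbb{C}[[z]]$, and let $\phi:G\to\Aut_{\mathbb{R}}(A)$ be the action given by $\phi_\sigma(\alpha)=\bar\alpha$ for $\alpha\in\mathbb{C}$, $\phi_\sigma(z)=z$, $\phi_\varrho(\alpha)=\alpha$ for $\alpha\in\mathbb{C}$, $\phi_\varrho(z)=\xi z$ with $\xi=\exp(2\pi i/n)$. Then there is an isomorphism of $\mathbb{R}$-algebras $A[G,\phi]\cong M_2(H_n(O))$, where $O=\mathbb{R}[[z^n]]$.
   Context: $A[G,\phi]$ is the skew group ring: the free left $A$-module with basis $\{[g]\}_{g\in G}$ and multiplication $a[f]\cdot b[g]=a\,\phi_f(b)[fg]$. For the complete DVR $O=\mathbb{R}[[z^n]]$, $H_n(O)$ is the ring of $n\times n$ matrices with entries in $O$ on and below the diagonal and in $z^nO$ above the diagonal. *)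

From HB Require Import structures.
From mathcomp Require Import all_boot all_order all_algebra all_fingroup.
From mathcomp Require Import reals trigo.
From mathcomp Require Import complex.

Set Implicit Arguments.
Unset Strict Implicit.
Unset Printing Implicit Defensive.

Import Order.TTheory GRing.Theory Num.Theory.
Local Open Scope ring_scope.

(* Formal power series K[[t]] over a ring K, as coefficient sequences.      *)
Definition ps (K : Type) := nat -> K.

Definition ps_add {K : pzRingType} (f g : ps K) : ps K := fun m => f m + g m.
Definition ps_zero {K : pzRingType} : ps K := fun _ => 0.
Definition ps_one {K : pzRingType} : ps K := fun m => if m == 0%N then 1 else 0.
Definition ps_mul {K : pzRingType} (f g : ps K) : ps K :=
  fun m => \sum_(l < m.+1) f l * g (m - l)%N.
Definition ps_const {K : pzRingType} (c : K) : ps K :=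
  fun m => if m == 0%N then c else 0.

Definition xi (R : realType) (n : nat) : R[i] :=
  Complex (cos (2 * pi / n%:R)) (sin (2 * pi / n%:R)).

Definition phi_sigma (R : realType) (f : ps R[i]) : ps R[i] :=
  fun j => conjc (f j).
Definition phi_rho (R : realType) (n : nat) (f : ps R[i]) : ps R[i] :=
  fun j => (xi R n) ^+ j * f j.

(* Skew group ring A[G, phi]: elements are functions x : gT -> A supported  *)
(* in G (x = sum_g x(g) [g]); a[f] * b[g] = a phi_f(b) [fg].                 *)
Section SkewGroupRing.
Variables (gT : finGroupType) (G : {group gT}) (K : pzRingType).
Variable phi : gT -> ps K -> ps K.

Definition skew_mem (x : gT -> ps K) : Prop := forall g, g \notin G -> x g = ps_zero.
Definition skew_add (x y : gT -> ps K) : gT -> ps K := fun g => ps_add (x g) (y g).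
Definition skew_one : gT -> ps K := fun g => if g == 1%g then ps_one else ps_zero.
Definition skew_mul (x y : gT -> ps K) : gT -> ps K :=
  fun h => if h \in G then
     (fun m => \sum_(f in G) ps_mul (x f) (phi f (y (f^-1 * h)%g)) m)
   else ps_zero.
Definition skew_scale (c : K) (x : gT -> ps K) : gT -> ps K :=
  fun g => ps_mul (ps_const c) (x g).
End SkewGroupRing.

(* M_2(H_n(O)), O = R[[z^n]].  An element of O is written as the sequence    *)
(* of its coefficients w.r.t. t = z^n.  An element of M_2(H_n(O)) is a 2x2   *)
(* matrix of n x n matrices over O, stored as M I J i j : ps R (block (I,J), *)
(* entry (i,j)); entries strictly above the diagonal of each block lie in    *)
(* z^n O, i.e. have zero constant term.                                      *)
Section M2Hn.
Variables (R : pzRingType) (n : nat).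

Definition M2mat := 'I_2 -> 'I_2 -> 'I_n -> 'I_n -> ps R.

Definition M2Hn_mem (M : M2mat) : Prop :=
  forall I J (i j : 'I_n), (i < j)%N -> M I J i j 0%N = 0.

Definition M2_add (M N : M2mat) : M2mat :=
  fun I J i j => ps_add (M I J i j) (N I J i j).
Definition M2_one : M2mat :=
  fun I J i j => if (I == J) && (i == j) then ps_one else ps_zero.
Definition M2_mul (M N : M2mat) : M2mat :=
  fun I K i k m => \sum_(J < 2) \sum_(j < n) ps_mul (M I J i j) (N J K j k) m.
Definition M2_scale (c : R) (M : M2mat) : M2mat :=
  fun I J i j => ps_mul (ps_const c) (M I J i j).
End M2Hn.

From HB Require Import structures.
From mathcomp Require Import all_boot all_order all_algebra all_fingroup.
From mathcomp Require Import reals trigo.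
From mathcomp Require Import complex.
From mathcomp Require Import boolp ring lra zify.

(* The skew group ring acts on A = C[[z]] by (a[g]) f = a phi_g(f).  Every phi_g
   fixes t = z^n and the real scalars, so this action is O-linear for O = R[[t]],
   and A is a free O-module with basis b_J z^j (b_0 = 1, b_1 = i, j < n).  Sending x
   to the matrix of its action is therefore a morphism of R-algebras into
   M_2(M_n(O)); it lands in M_2(H_n(O)) because the action never lowers the degree
   in z.  Each phi_g with g = rho^k sigma^e acts diagonally on coefficients,
   a z^m |-> xi^(mk) conj^e(a) z^m, so in every degree the matrix of x is obtained
   from the coefficients of the x_g by a discrete Fourier transform in k followed by
   the R-linear isomorphism (u, v) |-> (u + v, i (u - v)) in e.  Both transforms are
   invertible, hence so is the matrix map. *)

Set Implicit Arguments.
Unset Strict Implicit.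
Unset Printing Implicit Defensive.

Import Order.TTheory GRing.Theory Num.Theory.
Local Open Scope ring_scope.
Local Open Scope complex_scope.

Section DiscreteFourier.
Variables (F : fieldType) (n : nat) (z : F).
Hypothesis prim_z : n.-primitive_root z.

Definition dft (a : 'I_n -> F) (j : 'I_n) : F := \sum_(k < n) z ^+ (j * k) * a k.
Definition idft (b : 'I_n -> F) (k : 'I_n) : F :=
  n%:R^-1 * \sum_(j < n) z ^- (j * k) * b j.

Lemma sum_prim_root_ratio (k l : 'I_n) :
  \sum_(j < n) z ^+ (j * k) / z ^+ (j * l) = (k == l)%:R * n%:R.
Proof.
have z_neq0 : z != 0 by rewrite (prim_root_eq0 prim_z) -lt0n (prim_order_gt0 prim_z).
pose u := z ^+ k / z ^+ l.
have uE j : z ^+ (j * k) / z ^+ (j * l) = u ^+ j.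
  by rewrite exprMn exprVn -!exprM !(mulnC j).
under eq_bigr => j _ do rewrite uE.
have [eq_kl|neq_kl] := eqVneq k l.
  rewrite /u eq_kl divff ?expf_neq0 // mul1r.
  by under eq_bigr do rewrite expr1n; rewrite sumr_const card_ord.
have un1 : u ^+ n = 1.
  by rewrite exprMn exprVn -!exprM !(mulnC _ n) !exprM (prim_expr_order prim_z) !expr1n invr1 mulr1.
have u_neq1 : u != 1.
  rewrite /u (can2_eq (divfK _) (mulfK _)) ?expf_neq0 // mul1r.
  by rewrite (eq_prim_root_expr prim_z) !modn_small.
have := subrX1 u n; rewrite un1 subrr mul0r => /esym/eqP.
by rewrite mulf_eq0 subr_eq0 (negbTE u_neq1) => /eqP.
Qed.

Lemma dftK a k : idft (dft a) k = a k.
Proof.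
rewrite /idft; under eq_bigr do rewrite /dft mulr_sumr.
rewrite exchange_big /=.
have E (l j : 'I_n) : z ^- (j * k) * (z ^+ (j * l) * a l) = z ^+ (j * l) / z ^+ (j * k) * a l.
  by rewrite mulrCA mulrA.
under eq_bigr => l _ do rewrite (eq_bigr _ (fun j _ => E l j)) -mulr_suml sum_prim_root_ratio.
rewrite (bigD1 k) //= big1 => [|l /negbTE ->]; last by rewrite !mul0r.
by rewrite eqxx mul1r addr0 mulrA mulVf ?mul1r // (prim_root_natf_neq0 prim_z).
Qed.

Lemma idftK b j : dft (idft b) j = b j.
Proof.
rewrite /dft /idft; under eq_bigr do rewrite mulrCA mulr_sumr.
rewrite -mulr_sumr exchange_big /=.
have E (l k : 'I_n) : z ^+ (j * k) * (z ^- (l * k) * b l) = z ^+ (k * j) / z ^+ (k * l) * b l.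
  by rewrite mulrA !(mulnC k).
under eq_bigr => l _ do rewrite (eq_bigr _ (fun k _ => E l k)) -mulr_suml sum_prim_root_ratio.
rewrite (bigD1 j) //= big1 => [|l]; last by rewrite eq_sym => /negbTE ->; rewrite !mul0r.
by rewrite eqxx mul1r addr0 mulrA mulVf ?mul1r // (prim_root_natf_neq0 prim_z).
Qed.

End DiscreteFourier.

Lemma prim_root_min_order (F : nzRingType) (n : nat) (z : F) :
  (0 < n)%N -> z ^+ n = 1 -> (forall k, (0 < k < n)%N -> z ^+ k != 1) ->
  n.-primitive_root z.
Proof.
move=> n_gt0 zn1 zk_neq1; rewrite /primitive_root_of_unity n_gt0.
apply/forallP => i; rewrite unity_rootE.
have [lt_in|ge_in] := ltnP i.+1 n; first by rewrite (negbTE (zk_neq1 _ _)) // ltn_eqF.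
have -> : i.+1 = n by apply/eqP; rewrite eqn_leq ltn_ord.
by rewrite zn1 !eqxx.
Qed.

Section RootOfUnity.
Variables (R : realType) (n : nat).
Hypothesis n_gt0 : (0 < n)%N.

Lemma xi_expr k :
  xi R n ^+ k = Complex (cos (k%:R * (2 * pi / n%:R))) (sin (k%:R * (2 * pi / n%:R))).
Proof.
elim: k => [|k IH]; first by rewrite expr0 mul0r cos0 sin0.
rewrite exprS IH /xi -[k.+1]addn1 natrD (mulrDl k%:R 1) mul1r cosD sinD.
by apply/eqP; rewrite eq_complex /=; apply/andP; split; apply/eqP; ring.
Qed.

Lemma xi_prim : n.-primitive_root (xi R n).
Proof.
have n0 : n%:R != 0 :> R by rewrite pnatr_eq0 -lt0n.
apply: prim_root_min_order => // [|k /andP[k_gt0 k_lt_n]].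
  rewrite xi_expr (_ : n%:R * _ = pi *+ 2) ?cos2pi ?sin2pi //.
  by rewrite mulr2n; field.
pose t : R := k%:R * pi / n%:R.
have t_gt0 : 0 < t by rewrite divr_gt0 ?mulr_gt0 ?ltr0n ?pi_gt0.
have t_ltpi : t < pi.
  by rewrite ltr_pdivrMr ?ltr0n // mulrC ltr_pM2l ?pi_gt0 ?ltr_nat.
rewrite xi_expr (_ : k%:R * _ = t *+ 2); last by rewrite /t mulr2n; field.
apply/eqP => -[].
rewrite cos_mulr2n mulr2n => cos2t _.
have := sin2cos2 t; have : 0 < sin t by rewrite sin_gt0_pi ?t_gt0.
nra.
Qed.
End RootOfUnity.

Section PowerSeries.
Variable K : pzRingType.
Implicit Types f g h : ps K.

Definition ps_monomial (c : K) (q : nat) : ps K := fun m => if m == q then c else 0.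

Lemma ps_mul_rev f g m : ps_mul f g m = \sum_(l < m.+1) f (m - l)%N * g l.
Proof.
rewrite /ps_mul (reindex_inj rev_ord_inj) /=.
by apply: eq_bigr => l _; rewrite subSS subKn // -ltnS.
Qed.

Lemma ps_mulA f g h m : ps_mul (ps_mul f g) h m = ps_mul f (ps_mul g h) m.
Proof.
rewrite ps_mul_rev.
pose c3 (j l : nat) := f j * (g (m - j - l)%N * h l).
transitivity (\sum_(l < m.+1) \sum_(j < m.+1 | (j <= m - l)%N) c3 j l).
  apply: eq_bigr => l _; rewrite /ps_mul big_distrl (big_ord_narrow_leq (leq_subr _ _)) /=.
  by apply: eq_bigr => j _; rewrite /c3 mulrA subnAC.
rewrite (exchange_big_dep predT) //= {1}/ps_mul; apply: eq_bigr => j _.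
transitivity (\sum_(l < m.+1 | (l <= m - j)%N) c3 j l).
  by apply: eq_bigl => l; rewrite !leq_subRL ?leq_ord // addnC.
rewrite (big_ord_narrow_leq (leq_subr _ _)) ps_mul_rev big_distrr /=.
by apply: eq_bigr.
Qed.

Lemma ps_mul_suml (I : Type) (r : seq I) (P : pred I) (F : I -> ps K) g m :
  ps_mul (fun l => \sum_(i <- r | P i) F i l) g m = \sum_(i <- r | P i) ps_mul (F i) g m.
Proof.
rewrite /ps_mul exchange_big /=; apply: eq_bigr => l _; exact: mulr_suml.
Qed.

Lemma ps_mul_sumr (I : Type) (r : seq I) (P : pred I) (F : I -> ps K) f m :
  ps_mul f (fun l => \sum_(i <- r | P i) F i l) m = \sum_(i <- r | P i) ps_mul f (F i) m.
Proof.
rewrite /ps_mul exchange_big /=; apply: eq_bigr => l _; exact: mulr_sumr.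
Qed.

Lemma ps_mul_monomial f c q m :
  ps_mul f (ps_monomial c q) m = if (q <= m)%N then f (m - q)%N * c else 0.
Proof.
rewrite ps_mul_rev /ps_monomial; case: leqP => [le_qm|lt_mq].
  rewrite (bigD1 (Ordinal (leq_ltn_trans le_qm (ltnSn m)))) //= eqxx big1 ?addr0 //.
  move=> l neq_lq; rewrite ifF ?mulr0 //.
  by apply: contraNF neq_lq => /eqP eq_lq; apply/eqP/val_inj.
by rewrite big1 // => l _; rewrite ifF ?mulr0 // ltn_eqF // (leq_trans _ lt_mq) ?ltn_ord.
Qed.

Lemma ps_mulDl f g h m : ps_mul (ps_add f g) h m = ps_mul f h m + ps_mul g h m.
Proof. by rewrite /ps_mul -big_split; apply: eq_bigr => l _; rewrite mulrDl. Qed.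

Lemma ps_mul_const c f m : ps_mul (ps_const c) f m = c * f m.
Proof.
by rewrite /ps_mul big_ord_recl subn0 big1 ?addr0 // => l _; rewrite mul0r.
Qed.

End PowerSeries.

Section ComplexCoordinates.
Variable R : rcfType.
Implicit Types (c d : R[i]) (I J : 'I_2).

Definition basec J : R[i] := if J == ord0 then 1 else 'i%C.
Definition coordc I c : R := if I == ord0 then complex.Re c else complex.Im c.
Definition conjb (e : bool) c := if e then conjc c else c.

Lemma basec0 : basec ord0 = 1. Proof. by []. Qed.
Lemma basec1 : basec ord_max = 'i%C. Proof. by []. Qed.
Lemma conjc_i : conjc 'i%C = - 'i%C :> R[i].
Proof. by apply/eqP; rewrite eq_complex /= oppr0 !eqxx. Qed.

Lemma conjbT c : conjb true c = conjc c. Proof. by []. Qed.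
Lemma conjbF c : conjb false c = c. Proof. by []. Qed.

Lemma coordcE c : c = \sum_(I < 2) (coordc I c)%:C * basec I.
Proof.
case: c => a b; rewrite big_ord_recl big_ord1 /coordc /basec /=.
by apply/eqP; rewrite eq_complex /=; apply/andP; split; apply/eqP; ring.
Qed.

Lemma coordc_basec I J : coordc I (basec J) = (I == J)%:R.
Proof. by case: I => [[|[|]]] //= ?; case: J => [[|[|]]]. Qed.

Lemma coordcD I c d : coordc I (c + d) = coordc I c + coordc I d.
Proof. by case: c d => [a b] [a' b']; rewrite /coordc; case: ifP. Qed.

Lemma coordc0 I : coordc I 0 = 0.
Proof. by rewrite /coordc; case: ifP. Qed.

Lemma coordc_sum I (T : Type) (r : seq T) (P : pred T) (F : T -> R[i]) :
  coordc I (\sum_(t <- r | P t) F t) = \sum_(t <- r | P t) coordc I (F t).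
Proof. exact: (big_morph _ (coordcD I) (coordc0 I)). Qed.

Lemma coordcZ I (r : R) c : coordc I (r%:C * c) = r * coordc I c.
Proof. by case: c => a b; rewrite /coordc; case: ifP => /= _; ring. Qed.

Lemma coordc_sum_basec I (w : 'I_2 -> R) :
  coordc I (\sum_(I' < 2) (w I')%:C * basec I') = w I.
Proof.
rewrite coordc_sum (bigD1 I) //= big1 => [|I' neq_I'I]; last first.
  by rewrite coordcZ coordc_basec eq_sym (negbTE neq_I'I) mulr0.
by rewrite coordcZ coordc_basec eqxx mulr1 addr0.
Qed.

Lemma conjbM e c d : conjb e (c * d) = conjb e c * conjb e d.
Proof. by case: e => //=; rewrite rmorphM. Qed.

Lemma conjb_real e (r : R) : conjb e r%:C = r%:C.
Proof. by case: e => //; apply: conjc_real. Qed.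

Lemma conjb1 e : conjb e 1 = 1.
Proof. by case: e => //; apply: conjc1. Qed.

Lemma conjb0 e : conjb e 0 = 0.
Proof. by case: e => //; apply: conjc0. Qed.

Lemma conjb_sum e (T : Type) (r : seq T) (P : pred T) (F : T -> R[i]) :
  conjb e (\sum_(t <- r | P t) F t) = \sum_(t <- r | P t) conjb e (F t).
Proof. by case: e => //=; rewrite rmorph_sum. Qed.

Lemma conjb_i_inj : injective (fun e => conjb e 'i%C).
Proof. by case=> [] [] // /(congr1 (@complex.Im R)) /= eq_i; exfalso; lra. Qed.

Definition mixc (u : bool -> R[i]) J := u false * basec J + u true * conjc (basec J).
Definition unmixc (w : 'I_2 -> R[i]) (e : bool) :=
  (w ord0 - conjb e 'i%C * w ord_max) / 2%:R.

Lemma mixcK u e : unmixc (mixc u) e = u e.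
Proof.
have two_neq0 : 2%:R != 0 :> R[i] by rewrite pnatr_eq0.
rewrite /unmixc /mixc basec0 basec1 conjc1 conjc_i.
case: e; rewrite ?conjbT ?conjbF ?conjc_i.
  rewrite [X in X / _](_ : _ = u true + u false - 'i%C * 'i%C * (u true - u false)); last by ring.
  by rewrite -expr2 sqr_i; field.
rewrite [X in X / _](_ : _ = u true + u false + 'i%C * 'i%C * (u true - u false)); last by ring.
by rewrite -expr2 sqr_i; field.
Qed.

Lemma unmixcK w J : mixc (unmixc w) J = w J.
Proof.
have two_neq0 : 2%:R != 0 :> R[i] by rewrite pnatr_eq0.
rewrite /mixc /unmixc conjbT conjbF conjc_i.
have [->|->] : J = ord0 \/ J = ord_max by case: J => [[|[|]]] // ?; [left|right]; apply: val_inj.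
  by rewrite basec0 conjc1; field.
rewrite basec1 conjc_i.
rewrite [LHS](_ : _ = - 'i%C * 'i%C * w ord_max); last by field.
by rewrite mulNr -expr2 sqr_i opprK mul1r.
Qed.

End ComplexCoordinates.

Arguments basec {R} J.

Section TwistedFourier.
Variables (R : realType) (n : nat).
Hypothesis n_gt0 : (0 < n)%N.
Local Notation xi := (xi R n).

Definition twisted_dft (a : 'I_n * bool -> R[i]) (j : 'I_n) (J : 'I_2) : R[i] :=
  \sum_(p : 'I_n * bool) a p * (xi ^+ (j * p.1) * conjb p.2 (basec J)).

Definition twisted_idft (V : 'I_n -> 'I_2 -> R[i]) (p : 'I_n * bool) : R[i] :=
  idft xi (fun j => unmixc (V j) p.2) p.1.

Lemma twisted_dftE a j J :
  twisted_dft a j J = mixc (fun e => dft xi (fun k => a (k, e)) j) J.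
Proof.
transitivity (\sum_(k < n) \sum_(e : bool) a (k, e) * (xi ^+ (j * k) * conjb e (basec J))).
  by rewrite pair_bigA; apply: eq_bigr => -[k e].
rewrite /mixc /dft !mulr_suml -big_split /=; apply: eq_bigr => k _.
by rewrite big_bool /=; ring.
Qed.

Lemma twisted_dftK a p : twisted_idft (twisted_dft a) p = a p.
Proof.
case: p => k e; rewrite /twisted_idft /=.
rewrite (_ : (fun j => _) = dft xi (fun k => a (k, e))) ?dftK ?xi_prim //.
by apply/funext => j; rewrite (funext (twisted_dftE a j)) mixcK.
Qed.

Lemma twisted_idftK V j J : twisted_dft (twisted_idft V) j J = V j J.
Proof.
rewrite twisted_dftE /twisted_idft /=.
rewrite (_ : (fun e => _) = unmixc (V j)) ?unmixcK //.
by apply/funext => e; rewrite idftK ?xi_prim.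
Qed.
End TwistedFourier.

Section Dihedral.
Variables (n : nat) (gT : finGroupType) (G : {group gT}) (sigma rho : gT).
Hypotheses (sigma_in : sigma \in G) (rho_in : rho \in G).

Definition dihedral (p : 'I_n * bool) : gT := (rho ^+ p.1 * sigma ^+ p.2)%g.

Lemma mem_dihedral p : dihedral p \in G.
Proof. by rewrite groupM ?groupX. Qed.

Lemma G_dihedral : injective dihedral -> #|G| = (2 * n)%N -> G :=: dihedral @: setT.
Proof.
move=> dihedral_inj cardG; apply/eqP; rewrite eq_sym eqEcard; apply/andP; split.
  by apply/subsetP => _ /imsetP[p _ ->]; apply: mem_dihedral.
by rewrite card_imset // cardsT card_prod card_ord card_bool cardG mulnC.
Qed.

End Dihedral.

Section DihedralAction.
Variables (R : realType) (n : nat) (gT : finGroupType) (G : {group gT}) (sigma rho : gT).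
Variable phi : gT -> ps R[i] -> ps R[i].
Hypotheses (sigma_in : sigma \in G) (rho_in : rho \in G).
Hypothesis phi1 : forall f, phi 1%g f = f.
Hypothesis phiM : forall g h f, g \in G -> h \in G -> phi (g * h)%g f = phi g (phi h f).
Hypothesis phi_s : forall f, phi sigma f = phi_sigma f.
Hypothesis phi_r : forall f, phi rho f = phi_rho n f.

Lemma phi_rhoX k f m : phi (rho ^+ k)%g f m = xi R n ^+ (m * k) * f m.
Proof.
elim: k f => [|k IH] f; first by rewrite expg0 phi1 muln0 expr0 mul1r.
by rewrite expgSr phiM ?groupX // IH phi_r /phi_rho mulrA -exprD mulnS addnC.
Qed.

Lemma phi_dihedral (p : 'I_n * bool) f m :
  phi (dihedral sigma rho p) f m = xi R n ^+ (m * p.1) * conjb p.2 (f m).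
Proof.
case: p => k [|]; rewrite /dihedral phiM ?groupX // phi_rhoX /=.
  by rewrite expg1 phi_s.
by rewrite expg0 phi1.
Qed.

End DihedralAction.

Lemma sum_ord_mul (V : nmodType) (s n : nat) (F : nat -> V) :
  \sum_(q < s * n) F q = \sum_(l < s) \sum_(j < n) F (j + l * n)%N.
Proof.
rewrite -(big_mkord xpredT) big_nat_mul big_mkord; apply: eq_bigr => l _.
by rewrite -{1}[(l * n)%N]add0n big_addn mulSn addnK big_mkord.
Qed.

Section OperatorMatrix.
Variables (R : rcfType) (n : nat).
Implicit Types L : ps R[i] -> ps R[i].

(* The matrix over O = R[[t]], t = z^n, of an operator on C[[z]] in the O-basis
   b_J z^j: its (I, J, i, j) entry has as coefficient of t^s the b_I-coordinate of
   the coefficient of z^(i + n s) in L (b_J z^j). *)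
Definition op_mx L : M2mat R n :=
  fun I J i j s => coordc I (L (ps_monomial (basec J) j) (i + n * s)%N).

Lemma op_mx_id : op_mx id = @M2_one R n.
Proof.
apply/funext => I; apply/funext => J; apply/funext => i; apply/funext => j; apply/funext => s.
rewrite /op_mx /M2_one /ps_monomial.
case: s => [|s]; rewrite ?muln0 ?addn0.
  have [<-|neq_ij] := eqVneq i j; first by rewrite eqxx andbT coordc_basec; case: (I == J).
  by rewrite andbF ifF ?coordc0 // val_eqE (negbTE neq_ij).
rewrite ifF ?coordc0; first by case: ifP.
by apply/negbTE; rewrite neq_ltn (leq_trans (ltn_ord j)) ?orbT // mulnS addnCA leq_addr.
Qed.

Lemma op_mx_coef (n_gt0 : (0 < n)%N) L (j : 'I_n) J q :
  L (ps_monomial (basec J) j) q =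
  \sum_(I < 2) (op_mx L I J (Ordinal (ltn_pmod q n_gt0)) j (q %/ n)%N)%:C * basec I.
Proof. by rewrite /op_mx /= addnC mulnC -divn_eq -coordcE. Qed.

(* L is R-linear, causal, and commutes with multiplication by z^n. *)
Variable L : ps R[i] -> ps R[i].
Hypothesis L_expand : forall f m,
  L f m = \sum_(q < m.+1) \sum_(J < 2) (coordc J (f q))%:C * L (ps_monomial (basec J) q) m.
Hypothesis L_shift : forall c q m,
  L (ps_monomial c (q + n)) (m + n)%N = L (ps_monomial c q) m.

Lemma op_monomial_lt J q m : (m < q)%N -> L (ps_monomial (basec J) q) m = 0.
Proof.
move=> lt_mq; rewrite L_expand big1 // => q' _; rewrite big1 // => J' _.
by rewrite /ps_monomial ifF ?coordc0 ?mul0r // ltn_eqF // (leq_trans _ lt_mq) ?ltn_ord.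
Qed.

Lemma op_monomial_shiftn c q l m :
  L (ps_monomial c (q + l * n)) (m + l * n)%N = L (ps_monomial c q) m.
Proof.
elim: l => [|l IH]; first by rewrite !mul0n !addn0.
by rewrite mulSn (addnCA q) (addnCA m) !(addnC n) L_shift.
Qed.

Lemma op_mx_Hn : M2Hn_mem (op_mx L).
Proof.
by move=> I J i j lt_ij; rewrite /op_mx muln0 addn0 op_monomial_lt ?coordc0.
Qed.

Lemma op_mx_comp L' : op_mx (L \o L') = M2_mul (op_mx L) (op_mx L').
Proof.
apply/funext => I; apply/funext => K; apply/funext => i; apply/funext => k; apply/funext => s.
pose T q := \sum_(J < 2) coordc J (L' (ps_monomial (basec K) k) q) *
                         coordc I (L (ps_monomial (basec J) q) (i + n * s)%N).
transitivity (\sum_(q < (i + n * s).+1) T q).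
  rewrite /op_mx /= L_expand coordc_sum; apply: eq_bigr => q _.
  by rewrite coordc_sum; apply: eq_bigr => J _; rewrite coordcZ.
transitivity (\sum_(q < s.+1 * n) T q).
  have le_P : ((i + n * s).+1 <= s.+1 * n)%N by rewrite mulSn mulnC ltn_add2r.
  rewrite (big_ord_widen _ T le_P) big_mkcond; apply: eq_bigr => q _.
  case: ltnP => // lt_Pq; rewrite /T big1 // => J _.
  by rewrite op_monomial_lt ?coordc0 ?mulr0.
rewrite sum_ord_mul /M2_mul.
under [RHS]eq_bigr => J _ do under eq_bigr => j _ do rewrite ps_mul_rev.
rewrite [RHS]exchange_big /=; under [RHS]eq_bigr => j _ do rewrite exchange_big /=.
rewrite [RHS]exchange_big /=; apply: eq_bigr => l _; apply: eq_bigr => j _.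
have le_ls : (l <= s)%N by rewrite -ltnS.
rewrite /T; have -> : (i + n * s = i + n * (s - l) + l * n)%N.
  by rewrite -addnA (mulnC l) -mulnDr subnK.
by apply: eq_bigr => J _; rewrite /op_mx op_monomial_shiftn mulrC (mulnC n l).
Qed.
End OperatorMatrix.

Section SkewAction.
Variables (R : realType) (n : nat) (gT : finGroupType) (G : {group gT}) (sigma rho : gT).
Variable phi : gT -> ps R[i] -> ps R[i].
Hypothesis n_gt0 : (0 < n)%N.
Local Notation dih := (@dihedral n gT sigma rho).
Hypothesis phi1 : forall f, phi 1%g f = f.
Hypothesis phiM : forall g h f, g \in G -> h \in G -> phi (g * h)%g f = phi g (phi h f).
Hypothesis phi_dih : forall p f m, phi (dih p) f m = xi R n ^+ (m * p.1) * conjb p.2 (f m).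
Hypothesis G_dih : G :=: dih @: setT.

(* The action in degree 0 on i detects e, the action in degree 1 detects k. *)
Lemma dihedral_inj : injective dih.
Proof.
move=> [k e] [k' e'] eq_kk'.
have phiE f m : phi (dih (k, e)) f m = phi (dih (k', e')) f m by rewrite eq_kk'.
have := phiE (fun _ => 'i%C) 0%N; rewrite !phi_dih /= !mul0n !expr0 !mul1r.
move/conjb_i_inj => eq_e; subst e'.
have := phiE (fun _ => 1) 1%N; rewrite !phi_dih /= !mul1n conjb1 !mulr1 => /eqP.
rewrite (eq_prim_root_expr (xi_prim R n_gt0)) !modn_small // => /eqP eq_k.
by congr (_, _); apply: val_inj.
Qed.

Lemma dihedral_onto g : g \in G -> exists p, g = dih p.
Proof. by rewrite G_dih => /imsetP[p _ ->]; exists p. Qed.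

Lemma big_dihedral (V : nmodType) (F : gT -> V) : \sum_(g in G) F g = \sum_p F (dih p).
Proof.
rewrite G_dih big_imset /=; last by move=> p q _ _; apply: dihedral_inj.
by apply: eq_bigl => p; rewrite in_setT.
Qed.

Section Diagonal.
Variables (g : gT) (gG : g \in G).

Lemma phi_monomial c q : phi g (ps_monomial c q) = ps_monomial (phi g (ps_monomial c q) q) q.
Proof.
have [p ->] := dihedral_onto gG; apply/funext => m; rewrite !phi_dih /ps_monomial eqxx.
by case: eqP => [->|]; rewrite ?conjb0 ?mulr0.
Qed.

Lemma phi_coordE f m :
  phi g f m = \sum_(J < 2) (coordc J (f m))%:C * phi g (ps_monomial (basec J) m) m.
Proof.
have [p ->] := dihedral_onto gG; rewrite phi_dih {1}(coordcE (f m)) conjb_sum mulr_sumr.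
by apply: eq_bigr => J _; rewrite phi_dih /ps_monomial eqxx conjbM conjb_real mulrCA.
Qed.

Lemma phi_monomial_shift c q :
  phi g (ps_monomial c (q + n)) (q + n)%N = phi g (ps_monomial c q) q.
Proof.
have [p ->] := dihedral_onto gG; rewrite !phi_dih /ps_monomial !eqxx.
by rewrite mulnDl exprD (exprM _ n) (prim_expr_order (xi_prim R n_gt0)) expr1n mulr1.
Qed.

Lemma phi_ps_mul a b : phi g (ps_mul a b) = ps_mul (phi g a) (phi g b).
Proof.
have [p ->] := dihedral_onto gG; apply/funext => m; rewrite phi_dih /ps_mul conjb_sum mulr_sumr.
apply: eq_bigr => l _; rewrite !phi_dih conjbM.
have -> : (m * p.1 = l * p.1 + (m - l) * p.1)%N by rewrite -mulnDl subnKC // -ltnS.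
by rewrite exprD; ring.
Qed.

Lemma phi_sum (I : Type) (r : seq I) (P : pred I) (F : I -> ps R[i]) :
  phi g (fun m => \sum_(i <- r | P i) F i m) = fun m => \sum_(i <- r | P i) phi g (F i) m.
Proof.
have [p ->] := dihedral_onto gG; apply/funext => m; rewrite phi_dih conjb_sum mulr_sumr.
by apply: eq_bigr => i _; rewrite phi_dih.
Qed.

End Diagonal.

Definition skew_act (x : gT -> ps R[i]) (f : ps R[i]) : ps R[i] :=
  fun m => \sum_(g in G) ps_mul (x g) (phi g f) m.

Definition skew_mat (x : gT -> ps R[i]) : M2mat R n := op_mx (skew_act x).

Lemma skew_act_monomial x c q m :
  skew_act x (ps_monomial c q) m =
  if (q <= m)%N then \sum_(g in G) x g (m - q)%N * phi g (ps_monomial c q) q else 0.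
Proof.
rewrite /skew_act; under eq_bigr => g gG do rewrite (phi_monomial gG) ps_mul_monomial.
by case: leqP => _ //; rewrite big1.
Qed.

Lemma skew_act_shift x c q m :
  skew_act x (ps_monomial c (q + n)) (m + n)%N = skew_act x (ps_monomial c q) m.
Proof.
rewrite !skew_act_monomial leq_add2r subnDr; case: leqP => // _.
by apply: eq_bigr => g gG; rewrite phi_monomial_shift.
Qed.

Lemma skew_act_expand x f m :
  skew_act x f m =
  \sum_(q < m.+1) \sum_(J < 2) (coordc J (f q))%:C * skew_act x (ps_monomial (basec J) q) m.
Proof.
under [RHS]eq_bigr => q _ do under eq_bigr => J _ do
  rewrite skew_act_monomial -ltnS ltn_ord mulr_sumr.
rewrite [LHS]/skew_act; under [LHS]eq_bigr => g _ do rewrite ps_mul_rev.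
rewrite exchange_big /=; apply: eq_bigr => q _; rewrite exchange_big /=.
apply: eq_bigr => g gG; rewrite (phi_coordE gG) mulr_sumr.
by apply: eq_bigr => J _; rewrite mulrCA.
Qed.

Lemma skew_act_basis x (j : 'I_n) J m :
  skew_act x (ps_monomial (basec J) j) (m + j)%N = twisted_dft (fun p => x (dih p) m) j J.
Proof.
rewrite skew_act_monomial leq_addl addnK big_dihedral.
by apply: eq_bigr => p _; rewrite phi_dih /ps_monomial eqxx.
Qed.

Lemma skew_act_mul x y f m : skew_act (skew_mul G phi x y) f m = skew_act x (skew_act y f) m.
Proof.
rewrite /skew_act /skew_mul; under eq_bigr => h hG do rewrite hG ps_mul_suml.
rewrite exchange_big; apply: eq_bigr => g gG.
rewrite (phi_sum gG) ps_mul_sumr (reindex_inj (mulgI g)) /=.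
apply: eq_big => [h|h]; first by rewrite groupMl.
rewrite groupMl // => hG.
by rewrite mulKg ps_mulA phiM // -(phi_ps_mul gG (y h)).
Qed.

Lemma skew_act_add x y f m : skew_act (skew_add x y) f m = skew_act x f m + skew_act y f m.
Proof. by rewrite /skew_act -big_split; apply: eq_bigr => g _; apply: ps_mulDl. Qed.

Lemma skew_act_one f m : skew_act (@skew_one gT _) f m = f m.
Proof.
rewrite /skew_act (bigD1 1%g) ?group1 //= big1 => [|g /andP[_ /negbTE neq_g1]].
  by rewrite /skew_one eqxx phi1 -[ps_one]/(ps_const 1) ps_mul_const mul1r addr0.
by rewrite /skew_one neq_g1 /ps_mul big1 // => l _; rewrite mul0r.
Qed.

Lemma skew_act_scale c x f m : skew_act (skew_scale c x) f m = c * skew_act x f m.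
Proof.
rewrite /skew_act mulr_sumr; apply: eq_bigr => g _.
by rewrite /skew_scale ps_mulA ps_mul_const.
Qed.

Lemma skew_mat_Hn x : M2Hn_mem (skew_mat x).
Proof. exact/op_mx_Hn/skew_act_expand. Qed.

Lemma skew_matD x y : skew_mat (skew_add x y) = M2_add (skew_mat x) (skew_mat y).
Proof.
apply/funext => I; apply/funext => J; apply/funext => i; apply/funext => j; apply/funext => s.
by rewrite /skew_mat /op_mx /M2_add /ps_add skew_act_add coordcD.
Qed.

Lemma skew_matM x y : skew_mat (skew_mul G phi x y) = M2_mul (skew_mat x) (skew_mat y).
Proof.
rewrite /skew_mat -op_mx_comp; [|exact: skew_act_expand|exact: skew_act_shift].
by congr op_mx; apply/funext => f; apply/funext => m; apply: skew_act_mul.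
Qed.

Lemma skew_mat1 : skew_mat (@skew_one gT _) = @M2_one R n.
Proof.
rewrite /skew_mat -op_mx_id; congr op_mx.
by apply/funext => f; apply/funext => m; apply: skew_act_one.
Qed.

Lemma skew_matZ (r : R) x : skew_mat (skew_scale r%:C x) = M2_scale r (skew_mat x).
Proof.
apply/funext => I; apply/funext => J; apply/funext => i; apply/funext => j; apply/funext => s.
by rewrite /skew_mat /op_mx /M2_scale ps_mul_const skew_act_scale coordcZ.
Qed.

Lemma skew_mat_inj x y :
  skew_mem G x -> skew_mem G y -> skew_mat x = skew_mat y -> x = y.
Proof.
move=> x_mem y_mem eq_xy; apply/funext => g.
have [gG|gNG] := boolP (g \in G); last by rewrite x_mem ?y_mem.
have [p ->] := dihedral_onto gG; apply/funext => m.
rewrite -(twisted_dftK n_gt0 (fun p => x (dih p) m)) -(twisted_dftK n_gt0 (fun p => y (dih p) m)).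
congr twisted_idft; apply/funext => j; apply/funext => J; rewrite -!skew_act_basis.
by rewrite !(op_mx_coef n_gt0) -/(skew_mat x) -/(skew_mat y) eq_xy.
Qed.

Lemma skew_mat_surj M : M2Hn_mem M -> exists2 x, skew_mem G x & skew_mat x = M.
Proof.
move=> M_Hn.
pose V m (j : 'I_n) J : R[i] := \sum_(I < 2)
  (M I J (Ordinal (ltn_pmod (m + j) n_gt0)) j ((m + j) %/ n)%N)%:C * basec I.
pose x g m : R[i] := if [pick p | dih p == g] is Some p then twisted_idft (V m) p else 0.
have x_dih p m : x (dih p) m = twisted_idft (V m) p.
  by rewrite /x; case: pickP => [q /eqP/dihedral_inj -> // | /(_ p)]; rewrite eqxx.
exists x.
  move=> g gNG; apply/funext => m; rewrite /x; case: pickP => [p /eqP eq_pg|//].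
  by move: gNG; rewrite -eq_pg G_dih imset_f ?in_setT.
apply/funext => I; apply/funext => J; apply/funext => i; apply/funext => j; apply/funext => s.
rewrite /skew_mat /op_mx; have [le_j|lt_j] := leqP j (i + n * s).
  rewrite -(subnK le_j) skew_act_basis.
  rewrite (_ : (fun p => _) = twisted_idft (V (i + n * s - j)%N)); last first.
    by apply/funext => p; rewrite x_dih.
  rewrite (twisted_idftK n_gt0) /V.
  have -> : Ordinal (ltn_pmod (i + n * s - j + j) n_gt0) = i.
    by apply: val_inj; rewrite /= subnK // addnC mulnC modnMDl modn_small.
  have -> : ((i + n * s - j + j) %/ n = s)%N.
    by rewrite subnK // addnC mulnC divnMDl // divn_small ?addn0.
  by rewrite coordc_sum_basec.
have s0 : s = 0%N by move: lt_j (ltn_ord j); case: s => // s; rewrite mulnS; lia.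
move: lt_j; rewrite s0 muln0 addn0 => lt_ij.
by rewrite skew_act_monomial leqNgt lt_ij coordc0 M_Hn.
Qed.

End SkewAction.

Theorem proposition6p3 (R : realType) (n : nat) (n_gt0 : (0 < n)%N)
  (gT : finGroupType) (G : {group gT}) (sigma rho : gT)
  (* G = D_n = < sigma, rho | sigma^2 = e = rho^n, sigma rho sigma^-1 = rho^-1 > *)
  (sigma_in : sigma \in G) (rho_in : rho \in G)
  (genG : G :=: <<[set sigma; rho]>>%g)
  (sigma2 : (sigma ^+ 2 = 1)%g) (rhon : (rho ^+ n = 1)%g)
  (conj_rho : (sigma * rho * sigma^-1 = rho^-1)%g)
  (cardG : #|G| = (2 * n)%N)
  (* phi : G -> Aut_R(A), A = C[[z]], the action with the prescribed values *)
  (phi : gT -> ps R[i] -> ps R[i])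
  (phi1 : forall f, phi 1%g f = f)
  (phiM : forall g h f, g \in G -> h \in G -> phi (g * h)%g f = phi g (phi h f))
  (phi_s : forall f, phi sigma f = phi_sigma f)
  (phi_r : forall f, phi rho f = phi_rho n f) :
  exists Phi : (gT -> ps R[i]) -> M2mat R n,
    ((* Phi is a bijection A[G,phi] -> M_2(H_n(O)) *)
        (forall x, skew_mem G x -> M2Hn_mem (Phi x)) /\
        (forall M, M2Hn_mem M -> exists2 x, skew_mem G x & Phi x = M) /\
        (forall x y, skew_mem G x -> skew_mem G y -> Phi x = Phi y -> x = y) /\
        (* and a morphism of R-algebras *)
        (forall x y, skew_mem G x -> skew_mem G y ->
           Phi (skew_add x y) = M2_add (Phi x) (Phi y)) /\
        (forall x y, skew_mem G x -> skew_mem G y ->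
           Phi (skew_mul G phi x y) = M2_mul (Phi x) (Phi y)) /\
        Phi (@skew_one gT R[i]) = @M2_one R n /\
        (
         forall (r : R) x, skew_mem G x ->
           Phi (@skew_scale gT R[i] (r%:C)%C x) = M2_scale r (Phi x))).
Proof.
have phi_dih := phi_dihedral sigma_in rho_in phi1 phiM phi_s phi_r.
have G_dih := G_dihedral sigma_in rho_in (dihedral_inj n_gt0 phi_dih) cardG.
exists (skew_mat G phi); split; [|split; [|split; [|split; [|split; [|split]]]]].
- by move=> x _; apply: skew_mat_Hn phi_dih G_dih x.
- exact: skew_mat_surj n_gt0 phi_dih G_dih.
- exact: skew_mat_inj n_gt0 phi_dih G_dih.
- by move=> x y _ _; apply: skew_matD.
- by move=> x y _ _; apply: skew_matM n_gt0 phiM phi_dih G_dih x y.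
- exact: skew_mat1 phi1.
- by move=> r x _; apply: skew_matZ.
Qed.
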